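(* Let $L$ be a distributive lattice and $\mathbf x,\mathbf y\in L^n$. Then $\mathbf x$ and $\mathbf y$ are g-comonotone if and only if they are dually g-comonotone.
   Context: $\mathbf x,\mathbf y\in L^n$ are g-comonotone if for every pair $i,j\in\{1,\dots,n\}$: $(x_i\vee y_i)\wedge(x_j\vee y_j)=(x_i\wedge x_j)\vee(y_i\wedge y_j)$. They are dually g-comonotone if for every pair $i,j$: $(x_i\wedge y_i)\vee(x_j\wedge y_j)=(x_i\vee x_j)\wedge(y_i\vee y_j)$. *)

From HB Require Import structures.
From mathcomp Require Import all_boot all_order.
Set Implicit Arguments. Unset Strict Implicit. Unset Printing Implicit Defensive.
Import Order.LTheory.
Local Open Scope order_scope.

Definition g_comonotone (d : Order.disp_t) (L : latticeType d) (n : nat)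
  (x y : 'I_n -> L) : Prop :=
  forall i j : 'I_n,
    ((x i `|` y i) `&` (x j `|` y j)) = ((x i `&` x j) `|` (y i `&` y j)).

Definition dually_g_comonotone (d : Order.disp_t) (L : latticeType d) (n : nat)
  (x y : 'I_n -> L) : Prop :=
  forall i j : 'I_n,
    ((x i `&` y i) `|` (x j `&` y j)) = ((x i `|` x j) `&` (y i `|` y j)).

From HB Require Import structures.
From mathcomp Require Import all_boot all_order.
Import Order.LTheory.
Local Open Scope order_scope.

(* By distributivity (a ∨ b) ∧ (c ∨ e) is the join of the four meets a ∧ c,
   b ∧ e, a ∧ e, b ∧ c, so g-comonotonicity of the pair (a, b), (c, e) says
   that the crossed meets a ∧ e and b ∧ c lie below (a ∧ c) ∨ (b ∧ e), that is
   a ∧ e <= b ∨ c and b ∧ c <= a ∨ e.  Expanding (a ∨ c) ∧ (b ∨ e) in the same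
   way turns dual g-comonotonicity into the very same two inequalities. *)

Section CrossedMeets.
Variables (d : Order.disp_t) (L : distrLatticeType d).
Implicit Types a b c e u p q : L.

Lemma meetUU a b c e :
  (a `|` b) `&` (c `|` e) = (a `&` c) `|` (b `&` e) `|` ((a `&` e) `|` (b `&` c)).
Proof. by rewrite meetUr !meetUl joinACA [b `&` c `|` _]joinC joinACA. Qed.

Lemma le_meetIU u p q : (u <= (u `&` p) `|` (u `&` q)) = (u <= p `|` q).
Proof. by rewrite -meetUr lexI lexx. Qed.

Lemma le_crossed_meet a b c e :
  (a `&` e <= (a `&` c) `|` (b `&` e)) = (a `&` e <= b `|` c).
Proof.
rewrite [in RHS]joinC; apply/idP/idP => [|le_ae].
  by move/le_trans; apply; apply: leU2; [exact: leIr | exact: leIl].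
rewrite -le_meetIU in le_ae; apply: le_trans le_ae _.
by apply: leU2; [rewrite meetAC leIl | rewrite [_ `&` b]meetC meetCA leIr].
Qed.

Lemma meetUU_eq_joinII a b c e :
  (a `|` b) `&` (c `|` e) = (a `&` c) `|` (b `&` e) <->
  (a `&` e <= b `|` c) && (b `&` c <= a `|` e).
Proof.
rewrite meetUU; apply: (iff_trans (rwP join_idPl)).
by rewrite leUx le_crossed_meet [X in _ && (_ <= X)]joinC le_crossed_meet.
Qed.

Lemma joinII_eq_meetUU a b c e :
  (a `&` b) `|` (c `&` e) = (a `|` c) `&` (b `|` e) <->
  (a `&` e <= b `|` c) && (b `&` c <= a `|` e).
Proof.
have := meetUU_eq_joinII a c b e; rewrite [c `|` b]joinC [c `&` b]meetC => crossed.
by split=> [/esym/crossed | /crossed/esym].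
Qed.

End CrossedMeets.

Theorem theorem1 (d : Order.disp_t) (L : distrLatticeType d) (n : nat)
  (x y : 'I_n -> L) :
  g_comonotone x y <-> dually_g_comonotone x y.
Proof.
split=> comono i j.
  exact/joinII_eq_meetUU/meetUU_eq_joinII/comono.
exact/meetUU_eq_joinII/joinII_eq_meetUU/comono.
Qed.
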